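(* Let $n\geq 1$ and let $\pi\in S_n$ be a 321-avoiding permutation. Let $A_\pi$ be the linear Nakayama algebra (with $n+1$ simple modules) associated to $\pi$. Then the number of indecomposable projective $A_\pi$-modules (up to isomorphism) of injective dimension exactly one equals the number of fixed points of $\pi$.
   Context: $K$ is a field. A linear Nakayama algebra with $m$ simple modules is a (connected) algebra $A=KQ/I$ with $Q$ the linearly oriented quiver $0\to 1\to\cdots\to m-1$ and $I$ an admissible ideal; modules are finite-dimensional right modules, $e_i$ are the primitive idempotents, $S_i$ the simple modules. The indecomposable projective $e_iA$ is uniserial with composition factors $S_i,S_{i+1},\dots,S_{i+c_i-1}$ (top to socle), where $c_i=\dim_K e_iA$; $A$ is determined up to isomorphism by its Kupisch series $[c_0,\dots,c_{m-1}]$, and every indecomposable module is isomorphic to $e_iA/e_iJ^k$ for some $i$ and $1\le k\le c_i$ ($J$ the Jacobson radical). To such $A$ with $m=n+1$ simple modules one associates the Dyck path $\mathcal D_A$ of semilength $n$ (the top boundary of its Auslander–Reiten quiver): the lattice path from $(0,0)$ to $(2n,0)$ whose vertex with first coordinate $x$ has height $h(x)=\max\{k-1 : 0\le i\le n,\ 1\le k\le c_i,\ 2i+k-1=2n-x\}$. This gives a bijection between isomorphism classes of linear Nakayama algebras with $n+1$ simple modules and Dyck paths of semilength $n$ (paths with steps $u=(1,1)$, $d=(1,-1)$ from $(0,0)$ to $(2n,0)$ never going below $y=0$). Billey–Jockusch–Stanley bijection: write a Dyck path of semilength $n$ as $u^{a_1}d^{d_1}u^{a_2}d^{d_2}\cdots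 u^{a_\ell}d^{d_\ell}$ with all $a_i,d_i\ge 1$; set $A_j=a_1+\dots+a_j$ and $D_j=d_1+\dots+d_j$ for $1\le j\le \ell-1$. Define $\pi(D_j)=A_j+1$ for $1\le j\le\ell-1$, and fill the remaining positions $[n]\setminus\{D_1,\dots,D_{\ell-1}\}$ in increasing order with the remaining values $[n]\setminus\{A_1+1,\dots,A_{\ell-1}+1\}$. This is a bijection from Dyck paths of semilength $n$ to 321-avoiding permutations of $[n]$ (permutations with no $i<j<k$ and $\pi(k)<\pi(j)<\pi(i)$). $A_\pi$ denotes the linear Nakayama algebra whose Dyck path $\mathcal D_{A_\pi}$ is mapped to $\pi$ by this bijection. *)

From mathcomp Require Import all_boot all_order all_fingroup.
Set Implicit Arguments. Unset Strict Implicit. Unset Printing Implicit Defensive.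

(* A Kupisch series is c = [c_0; ...; c_(m-1)] (c_i = dim e_i A).      *)
(* Connected linear Nakayama algebra KQ/I, Q = 0 -> 1 -> ... -> m-1,   *)
(* I admissible:  c_(m-1) = 1, c_i >= 2 for i < m-1,                   *)
Definition kupisch_series (m : nat) (c : seq nat) : bool :=
  [&& size c == m, 0 < m, nth 0 c m.-1 == 1,
      all (fun i => 2 <= nth 0 c i) (iota 0 m.-1)
    & all (fun i => nth 0 c i <= (nth 0 c i.+1).+1) (iota 0 m.-1)].

(* Indecomposable modules: the pair (i,k) with 1 <= k <= c_i stands for
   e_i A / e_i J^k, uniserial with composition factors S_i,...,S_(i+k-1)
   (top to socle).  The indecomposable projective P_i = e_i A is (i, c_i). *)

(* Top index of the injective envelope I(S_s) of the simple S_s: the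
   indecomposable injective with socle S_s is the longest uniserial module
   with socle S_s, i.e. (j, s-j+1) with j minimal such that c_j >= s-j+1. *)
Definition inj_top (c : seq nat) (s : nat) : nat :=
  find (fun j => s - j < nth 0 c j) (iota 0 s.+1).

(* Injective dimension of the uniserial module (i,k), computed along its
   minimal injective coresolution: the injective envelope of (i,k) is
   I(S_(i+k-1)) = (j, i+k-j); the cokernel (first cosyzygy) is (j, i-j),
   zero iff j = i (i.e. (i,k) is injective).  Tops strictly decrease, so
   fuel i.+1 suffices. *)
Fixpoint injdim_aux (c : seq nat) (fuel i k : nat) : nat :=
  match fuel with
  | 0 => 0
  | f.+1 =>
      let j := inj_top c (i + k).-1 in
      if j == i then 0 else (injdim_aux c f j (i - j)).+1
  end.

Definition injdim (c : seq nat) (i k : nat) : nat := injdim_aux c i.+1 i k.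

Definition injdim_proj (c : seq nat) (i : nat) : nat := injdim c i (nth 0 c i).

(* Dyck path D_A of A with n+1 simples (semilength n).                *)
Definition dyck_height (n : nat) (c : seq nat) (x : nat) : nat :=
  \max_(i < n.+1 | (2 * i <= 2 * n - x) && ((2 * n - x).+1 - 2 * i <= nth 0 c i))
     (2 * n - x - 2 * i).

(* Step sequence of D_A: true = u = (1,1), false = d = (1,-1);
   step x goes from vertex x to vertex x+1. *)
Definition dyck_steps (n : nat) (c : seq nat) : seq bool :=
  [seq dyck_height n c x < dyck_height n c x.+1 | x <- iota 0 (2 * n)].

(* Billey–Jockusch–Stanley bijection.  Writing the path as            *)
(* u^a1 d^d1 ... u^al d^dl, the pairs (D_j, A_j) for 1<=j<=l-1 are     *)
(* exactly read off at the valleys (a d-step immediately followed by a *)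
(* u-step): D_j = #d-steps and A_j = #u-steps up to the valley.        *)
Definition valleys (s : seq bool) : seq nat :=
  [seq x <- iota 0 (size s).-1 | ~~ nth false s x && nth false s x.+1].

Definition bjs_Dpos (s : seq bool) : seq nat :=
  [seq count negb (take x.+1 s) | x <- valleys s].
Definition bjs_Avals (s : seq bool) : seq nat :=
  [seq (count id (take x.+1 s)).+1 | x <- valleys s].

(* pi(D_j) = A_j + 1; remaining positions of [1..n] filled in increasing
   order with the remaining values.  Positions/values are 1-based. *)
Definition bjs (n : nat) (s : seq bool) (p : nat) : nat :=
  let Dp := bjs_Dpos s in
  let Av := bjs_Avals s in
  let restpos := [seq q <- iota 1 n | q \notin Dp] in
  let restval := [seq v <- iota 1 n | v \notin Av] in
  if p \in Dp then nth 0 Av (index p Dp)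
  else nth 0 restval (index p restpos).

Definition avoids321 (n : nat) (pi : 'S_n) : bool :=
  [forall i : 'I_n, forall j : 'I_n, forall k : 'I_n,
     ~~ [&& i < j, j < k, pi k < pi j & pi j < pi i]].

(* c is the Kupisch series of A_pi: the BJS image of D_A is pi
   (pi : 'S_n is read 1-based via i |-> (pi i).+1). *)
Definition is_A_pi (n : nat) (pi : 'S_n) (c : seq nat) : Prop :=
  kupisch_series n.+1 c /\
  forall i : 'I_n, bjs n (dyck_steps n c) i.+1 = (pi i).+1.

From mathcomp Require Import all_boot all_order all_fingroup.
From mathcomp Require Import zify.
Set Implicit Arguments. Unset Strict Implicit. Unset Printing Implicit Defensive.

(* Write d_j = j + c_j, so that e_jA has composition factors S_j, ..., S_(d_j - 1); for a
   Kupisch series d is weakly increasing, d_j >= j + 2 for j < n and d_n = n + 1.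
   The injective envelope of e_iA is I(S_(d_i - 1)), whose top is the least j with
   d_j >= d_i, and the cokernel has socle S_(i-1); comparing the tops of these two
   injective hulls shows that e_iA has injective dimension one iff i > 0 and every jump
   d_j < d_(j+1) with j < i has d_j < i.
   On the other side, step x of D_A is an up-step iff 2n - x = j + d_j for some j < n, so
   the valleys of D_A are the jumps of d, the jump at j giving the BJS pair
   (D, A + 1) = (n + 1 - d_j, n - j).  As D < A + 1 for every pair, counting what the
   increasing filling leaves below q shows that q is a fixed point iff no interval
   [D, A + 1] contains q.  For q = n - i + 1 this is the condition above, so i |-> n - i
   matches the two sets. *)


Lemma index_sorted_ltn (s : seq nat) q :
  sorted ltn s -> q \in s -> index q s = count (fun y => y < q) s.
Proof.
elim: s => //= x s IHs; rewrite path_sortedE; last exact: ltn_trans.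
case/andP=> /allP gt_x sorted_s; rewrite inE eq_sym.
have [<- _|ne_xq /= s_q] := eqP.
  rewrite ltnn (eq_in_count (a2 := pred0)) ?count_pred0 // => y /gt_x lt_qy.
  by apply/negbTE; rewrite -leqNgt ltnW.
by rewrite IHs // [x < q](gt_x q s_q).
Qed.

Lemma nth_eq_index (T : eqType) (x0 x : T) s i : x != x0 -> uniq s ->
  (nth x0 s i == x) = (x \in s) && (index x s == i).
Proof.
move=> x_neq0 uniq_s; have [lt_is|le_si] := ltnP i (size s); last first.
  rewrite nth_default // eq_sym (negbTE x_neq0); case s_x: (x \in s) => //=.
  by rewrite ltn_eqF // (leq_trans _ le_si) ?index_mem.
apply/eqP/andP=> [<-|[s_x /eqP <-]]; last exact: nth_index.
by rewrite mem_nth // index_uniq.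
Qed.

Lemma count_sub_eq (T : eqType) (a1 a2 : pred T) s : {in s, forall x, a1 x -> a2 x} ->
  (count a1 s == count a2 s) = all (fun x => a2 x ==> a1 x) s.
Proof.
elim: s => //= x s IHs a12.
have a12s : {in s, forall y, a1 y -> a2 y} by move=> y s_y; apply: a12; rewrite inE s_y orbT.
have le_s : count a1 s <= count a2 s.
  rewrite -(eq_in_count (a1 := predI a1 a2)) ?sub_count // => [y /andP[] // | y s_y /=].
  by case a1y: (a1 y); rewrite //= a12s.
case a1x: (a1 x); first by rewrite a12 ?mem_head // eqn_add2l IHs.
by case: (a2 x); rewrite ?eqn_add2l ?IHs // ltn_eqF.
Qed.

Lemma count_filter_notin (L : seq nat) n (p : pred nat) :
  uniq L -> {subset L <= iota 1 n} ->
  count p [seq v <- iota 1 n | v \notin L] + count p L = count p (iota 1 n).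
Proof.
move=> uniq_L sub_L.
have /seq.permP -> : perm_eq L [seq v <- iota 1 n | v \in L].
  apply: uniq_perm; rewrite ?filter_uniq ?iota_uniq // => v.
  by rewrite mem_filter; apply/idP/andP=> [L_v|[]//]; rewrite L_v sub_L.
by rewrite addnC -count_cat; apply/seq.permP; rewrite perm_filterC.
Qed.

Definition bjs_fill (n : nat) (Dp Av : seq nat) (p : nat) : nat :=
  let restpos := [seq q <- iota 1 n | q \notin Dp] in
  let restval := [seq v <- iota 1 n | v \notin Av] in
  if p \in Dp then nth 0 Av (index p Dp) else nth 0 restval (index p restpos).

Lemma bjsE n s : bjs n s =1 bjs_fill n (bjs_Dpos s) (bjs_Avals s).
Proof. by []. Qed.

Section ArcFilling.

Variables (T : eqType) (V : seq T) (fD fA : T -> nat) (n : nat).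
Hypotheses (uniq_D : uniq (map fD V)) (uniq_A : uniq (map fA V)).
Hypothesis arc_lt : {in V, forall x, 0 < fD x < fA x}.
Hypothesis arc_le : {in V, forall x, fA x <= n}.

Lemma bjs_fill_fixedE q : 0 < q <= n ->
  (bjs_fill n (map fD V) (map fA V) q == q) = ~~ has (fun x => fD x <= q <= fA x) V.
Proof.
move=> q_bounds; rewrite /bjs_fill.
have [D_q|D_qF] := ifPn.
  have /mapP[x0 _ _] := D_q.
  have lt_k : index q (map fD V) < size V by rewrite -(size_map fD) index_mem.
  have := nth_index 0 D_q; rewrite !(nth_map x0) //.
  set x := nth x0 V _ => Dx_q; have V_x : x \in V by apply: mem_nth.
  have /andP[_ lt_qA] := arc_lt V_x; rewrite Dx_q in lt_qA.
  rewrite gtn_eqF //; apply/esym/negbF/hasP; exists x => //.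
  by rewrite Dx_q leqnn ltnW.
have sub_D : {subset map fD V <= iota 1 n}.
  by move=> _ /mapP[x V_x ->]; rewrite mem_iota; have := arc_lt V_x; have := arc_le V_x; lia.
have sub_A : {subset map fA V <= iota 1 n}.
  by move=> _ /mapP[x V_x ->]; rewrite mem_iota; have := arc_lt V_x; have := arc_le V_x; lia.
have q_iota : q \in iota 1 n by rewrite mem_iota; lia.
rewrite nth_eq_index -?lt0n ?filter_uniq ?iota_uniq //; last by case/andP: q_bounds.
rewrite mem_filter q_iota andbT.
have [A_q|A_qF] /= := boolP (q \in map fA V).
  apply/esym/negbF; have /mapP[x V_x ->] := A_q; apply/hasP; exists x => //.
  by have := arc_lt V_x; have := arc_le V_x; lia.
have sorted_rest L : sorted ltn [seq v <- iota 1 n | v \notin L].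
  exact/sorted_filter/iota_ltn_sorted/ltn_trans.
rewrite !index_sorted_ltn ?mem_filter ?A_qF ?D_qF //.
have := count_filter_notin (fun v => v < q) uniq_A sub_A.
have := count_filter_notin (fun v => v < q) uniq_D sub_D.
move=> sumD sumA.
set cA := count _ (map fA V) in sumA; set cD := count _ (map fD V) in sumD.
rewrite -(eqn_add2r cA) sumA -sumD eqn_add2l eq_sym.
rewrite /cA /cD !count_map count_sub_eq => [|x V_x /=]; last first.
  by have := arc_lt V_x; lia.
rewrite -all_predC; apply: eq_in_all => x V_x /=.
have neq_D : fD x != q by apply: contraNneq D_qF => <-; apply: map_f.
have neq_A : fA x != q by apply: contraNneq A_qF => <-; apply: map_f.
by move: neq_D neq_A (arc_lt V_x); lia.
Qed.

End ArcFilling.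

Lemma count_take_leq (T : eqType) (a : pred T) s x y :
  x <= y -> count a (take x s) <= count a (take y s).
Proof.
by move=> le_xy; rewrite -(take_takel s le_xy); apply: leq_count_subseq; apply: take_subseq.
Qed.

Lemma count_take_ltn (T : eqType) (x0 : T) (a : pred T) s x y :
  x <= y < size s -> a (nth x0 s y) -> count a (take x s) < count a (take y.+1 s).
Proof.
case/andP=> le_xy lt_ys a_y.
by rewrite (take_nth x0) // -cats1 count_cat /= a_y addn1 ltnS count_take_leq.
Qed.

Lemma valleysP s x :
  (x \in valleys s) = [&& x.+1 < size s, ~~ nth false s x & nth false s x.+1].
Proof. by rewrite mem_filter mem_iota add0n andbC; congr (_ && _); apply/idP/idP; lia. Qed.

Lemma valley_counts_ltn s x y : x \in valleys s -> y \in valleys s -> x < y ->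
  (count negb (take x.+1 s) < count negb (take y.+1 s)) &&
  (count id (take x.+1 s) < count id (take y.+1 s)).
Proof.
rewrite !valleysP => /and3P[x_s _ up_x] /and3P[y_s down_y _] lt_xy.
rewrite (count_take_ltn (x0 := false)) ?lt_xy ?(ltnW y_s) //=.
apply: (leq_trans (count_take_ltn (a := id) (x := x.+1) _ up_x)); first by rewrite leqnn.
by rewrite count_take_leq.
Qed.

Lemma uniq_valley_counts s : uniq (bjs_Dpos s) /\ uniq (bjs_Avals s).
Proof.
have uniq_map (f : nat -> nat) :
    (forall x y, x \in valleys s -> y \in valleys s -> x < y -> f x < f y) ->
    uniq (map f (valleys s)).
  move=> f_mono; rewrite map_inj_in_uniq ?filter_uniq ?iota_uniq // => x y Vx Vy eq_f.
  have [lt_xy|lt_yx|//] := ltngtP x y.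
    by have := f_mono x y Vx Vy lt_xy; rewrite eq_f ltnn.
  by have := f_mono y x Vy Vx lt_yx; rewrite eq_f ltnn.
split; apply: uniq_map => x y Vx Vy lt_xy; have /andP[] := valley_counts_ltn Vx Vy lt_xy => //.
Qed.

Definition proj_end (c : seq nat) (j : nat) : nat := j + nth 0 c j.

Definition jumps_below (c : seq nat) (i : nat) : bool :=
  all (fun j => (proj_end c j < proj_end c j.+1) ==> (proj_end c j < i)) (iota 0 i).

Lemma injdim_proj_eq1E c i : inj_top c (proj_end c i).-1 <= i ->
  (injdim_proj c i == 1) =
  (inj_top c (proj_end c i).-1 != i) && (inj_top c i.-1 == inj_top c (proj_end c i).-1).
Proof.
rewrite /injdim_proj /injdim /proj_end /=; move: (inj_top c _) => j0 le_j0i.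
have [// | ne_j0i] := eqVneq j0 i.
case: i le_j0i ne_j0i => [|i le_j0i _]; first by rewrite leqn0 => /eqP->.
by rewrite /= subnKC // eqSS; case: ifP.
Qed.

Section KupischSeries.

Variables (n : nat) (c : seq nat).
Hypothesis kup : kupisch_series n.+1 c.

Local Notation d := (proj_end c).

Lemma kupischP :
  [/\ nth 0 c n = 1, forall j, j < n -> 2 <= nth 0 c j &
      forall j, j < n -> nth 0 c j <= (nth 0 c j.+1).+1].
Proof.
case/and5P: kup => _ _ /eqP c_n /allP c_ge2 /allP c_step.
by split=> // j lt_jn; [apply: c_ge2 | apply: c_step]; rewrite mem_iota.
Qed.

Lemma proj_end_last : d n = n.+1.
Proof. by case: kupischP => c_n _ _; rewrite /proj_end c_n addn1. Qed.

Lemma proj_end_ge j : j < n -> j.+2 <= d j.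
Proof. by case: kupischP => _ c_ge2 _ /c_ge2; rewrite /proj_end; lia. Qed.

Lemma proj_end_mono j k : j <= k -> k <= n -> d j <= d k.
Proof.
case: kupischP => _ _ c_step le_jk; elim: k le_jk => [|k IHk]; first by rewrite leqn0 => /eqP->.
rewrite leq_eqVlt => /orP[/eqP-> //|le_jk lt_kn].
by have := IHk le_jk (ltnW lt_kn); have := c_step k lt_kn; rewrite /proj_end; lia.
Qed.

Lemma proj_end_le j : j <= n -> d j <= n.+1.
Proof. by move=> le_jn; rewrite -proj_end_last proj_end_mono. Qed.

Lemma proj_end_gt j : j <= n -> j < d j.
Proof.
by rewrite leq_eqVlt => /orP[/eqP->|/proj_end_ge]; rewrite ?proj_end_last //; lia.
Qed.

Lemma proj_end_pred_last : 0 < n -> d n.-1 = n.+1.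
Proof.
move=> n_gt0; apply/eqP; rewrite eqn_leq proj_end_le ?leq_pred //.
by have := @proj_end_ge n.-1; rewrite ltn_predL => /(_ n_gt0); lia.
Qed.

Lemma inj_top_spec s : s <= n ->
  [/\ inj_top c s <= s, s < d (inj_top c s) & forall j, j < inj_top c s -> d j <= s].
Proof.
move=> le_sn.
have has_top : has (fun j => s - j < nth 0 c j) (iota 0 s.+1).
  apply/hasP; exists s; first by rewrite mem_iota; lia.
  by rewrite /= subnn; have := proj_end_gt le_sn; rewrite /proj_end; lia.
have lt_top : inj_top c s < s.+1 by move: has_top; rewrite has_find size_iota.
split; first by [].
  by have := nth_find 0 has_top; rewrite -/(inj_top c s) nth_iota // add0n /proj_end; lia.
move=> j lt_j; have := before_find 0 lt_j; rewrite nth_iota; last exact: ltn_trans lt_top.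
by rewrite add0n /proj_end; move: lt_j lt_top; lia.
Qed.

Lemma inj_top_le s : s <= n -> inj_top c s <= s.
Proof. by case/inj_top_spec. Qed.

Lemma lt_inj_top j s : j <= n -> s <= n -> (j < inj_top c s) = (d j <= s).
Proof.
move=> le_jn le_sn; have [_ lt_s_top below_top] := inj_top_spec le_sn.
apply/idP/idP=> [/below_top //|le_djs]; rewrite ltnNge; apply/negP=> le_top_j.
have := proj_end_mono le_top_j le_jn; lia.
Qed.

Lemma injdim_proj_eq1 i : i <= n -> (injdim_proj c i == 1) = (0 < i) && jumps_below c i.
Proof.
move=> le_in; have lt_i_di := proj_end_gt le_in.
have le_di := proj_end_le le_in.
set j0 := inj_top c (d i).-1.
have lt_j0 j : j <= n -> (j < j0) = (d j < d i).
  by move=> le_jn; rewrite lt_inj_top //; lia.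
have le_j0i : j0 <= i by rewrite leqNgt lt_j0 // ltnn.
rewrite injdim_proj_eq1E // -/j0; clearbody j0; have [i0 | i_gt0] := posnP i.
  by move: le_j0i; rewrite i0 leqn0 => /eqP ->.
set j1 := inj_top c i.-1.
have lt_j1 j : j <= n -> (j < j1) = (d j < i).
  by move=> le_jn; rewrite lt_inj_top //; lia.
have le_j1n : j1 <= n by rewrite (leq_trans (inj_top_le _)); lia.
clearbody j1.
apply/andP/allP=> [[_ /eqP eq_j1] j | low_jumps].
  rewrite mem_iota => /andP[_ lt_ji]; apply/implyP=> jump.
  have le_jn : j <= n by lia.
  by rewrite -lt_j1 // eq_j1 lt_j0 // (leq_trans jump) ?proj_end_mono.
have {}low_jumps j : j < i -> d j < d j.+1 -> d j < i.
  by move=> lt_ji; apply/implyP/low_jumps; rewrite mem_iota.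
have ge_dj0 : d i <= d j0 by rewrite leqNgt -lt_j0 ?ltnn //; lia.
have lt_j0i : j0 < i.
  rewrite ltn_neqAle le_j0i andbT; apply/eqP=> eq_j0i.
  have jump : d i.-1 < d i.-1.+1 by rewrite prednK // -lt_j0 ?eq_j0i; lia.
  have := @proj_end_gt i.-1; have := low_jumps i.-1; lia.
have le_j1j0 : j1 <= j0 by rewrite leqNgt lt_j1; lia.
have le_j0j1 : j0 <= j1.
  rewrite leqNgt; apply/negP=> lt_j1j0.
  have lt_dj_di : d j0.-1 < d i by rewrite -lt_j0; lia.
  have ge_dj_i : i <= d j0.-1 by rewrite leqNgt -lt_j1; lia.
  have jump : d j0.-1 < d j0.-1.+1 by rewrite prednK; lia.
  by have := low_jumps j0.-1; lia.
by rewrite ltn_eqF // eqn_leq le_j1j0 le_j0j1.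
Qed.

End KupischSeries.

Definition up_anchor (n : nat) (c : seq nat) (t : nat) : bool :=
  has (fun j => j + proj_end c j == t) (iota 0 n).

Section DyckPath.

Variables (n : nat) (c : seq nat).
Hypothesis kup : kupisch_series n.+1 c.

Local Notation d := (proj_end c).
Local Notation h := (dyck_height n c).

(* Vertex 2n - t of D_A lies on the slope of e_iA, i being the least index with t < i + d_i. *)
Lemma dyck_height_col i t : i <= n -> (0 < i -> i.-1 + d i.-1 <= t) -> t < i + d i ->
  t <= 2 * n -> h (2 * n - t) = t - 2 * i.
Proof.
move=> le_in lo hi le_t; rewrite /dyck_height subKn //.
have le_2i_t : 2 * i <= t.
  have [-> //|i_gt0] := posnP i.
  by have := lo i_gt0; have := @proj_end_ge _ _ kup i.-1; lia.
apply/eqP; rewrite eqn_leq; apply/andP; split.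
  apply/bigmax_leqP=> j /andP[_ in_col]; rewrite leq_sub2l // leq_mul2l /= leqNgt.
  apply/negP=> lt_ji; have := @proj_end_mono _ _ kup j i.-1; have := lo.
  by move: in_col; rewrite /proj_end; lia.
have lt_i : i < n.+1 by [].
apply: (@leq_bigmax_cond _ (fun j : 'I_n.+1 => (2 * j <= t) && (t.+1 - 2 * j <= nth 0 c j))
  (fun j : 'I_n.+1 => t - 2 * j) (Ordinal lt_i)).
by rewrite /= le_2i_t /=; move: hi; rewrite /proj_end; lia.
Qed.

Lemma exists_col t : t <= 2 * n ->
  exists i, [/\ i <= n, 0 < i -> i.-1 + d i.-1 <= t & t < i + d i].
Proof.
move=> le_t; have ex_i : exists i, t < i + d i by exists n; rewrite proj_end_last //; lia.
case: (ex_minnP ex_i) => i hi min_i; exists i; split=> //.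
  by apply: min_i; rewrite proj_end_last //; lia.
by move=> i_gt0; rewrite leqNgt; apply/negP=> /min_i; lia.
Qed.

Lemma dyck_height_step x : x < 2 * n ->
  if up_anchor n c (2 * n - x) then h x.+1 = (h x).+1 else h x = (h x.+1).+1.
Proof.
move=> lt_x.
have [t [-> t_gt0 le_t]] : exists t, [/\ x = 2 * n - t, 0 < t & t <= 2 * n].
  by exists (2 * n - x); split; lia.
have -> : (2 * n - t).+1 = 2 * n - t.-1 by lia.
have [i [le_in lo hi]] := exists_col le_t.
rewrite subKn // (dyck_height_col le_in lo hi le_t).
have [anchor_t | not_anchor_t] := boolP ((0 < i) && (t == i.-1 + d i.-1)).
  case/andP: anchor_t => i_gt0 /eqP t_eq.
  have -> : up_anchor n c t by apply/hasP; exists i.-1; rewrite ?mem_iota ?t_eq //; lia.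
  have ge_i := @proj_end_ge _ _ kup i.-1; have mono := @proj_end_mono _ _ kup i.-2 i.-1.
  by rewrite (@dyck_height_col i.-1 t.-1) //; move: ge_i mono; lia.
have -> : up_anchor n c t = false.
  apply/hasPn=> j; rewrite mem_iota => /andP[_ lt_jn]; apply/negP=> /eqP t_eq.
  have := @proj_end_mono _ _ kup i j; have := @proj_end_mono _ _ kup j i.-1.
  by move: not_anchor_t lo hi; rewrite -t_eq; lia.
have ge_i := @proj_end_ge _ _ kup i.-1.
by rewrite (@dyck_height_col i t.-1 le_in); move: ge_i not_anchor_t lo hi; lia.
Qed.

Lemma size_dyck_steps : size (dyck_steps n c) = 2 * n.
Proof. by rewrite size_map size_iota. Qed.

Lemma nth_dyck_steps x : x < 2 * n ->
  nth false (dyck_steps n c) x = up_anchor n c (2 * n - x).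
Proof.
move=> lt_x; rewrite (nth_map 0) ?size_iota // nth_iota //.
by have := dyck_height_step lt_x; case: up_anchor => ->; rewrite ?ltnSn // ltnNge leqnSn.
Qed.

Lemma dyck_height0 : h 0 = 0.
Proof.
have := @dyck_height_col n (2 * n) (leqnn n); rewrite subnn => -> //.
- by move=> n_gt0; rewrite proj_end_pred_last //; lia.
- by rewrite proj_end_last //; lia.
Qed.

Lemma count_up_take k : k <= 2 * n -> 2 * count id (take k (dyck_steps n c)) = k + h k.
Proof.
elim: k => [|k IHk] lt_k; first by rewrite take0 dyck_height0.
rewrite (take_nth false) ?size_dyck_steps // -cats1 count_cat /= nth_dyck_steps //.
by have := dyck_height_step lt_k; have := IHk (ltnW lt_k); case: up_anchor => /=; lia.
Qed.

Hypothesis n_gt0 : 0 < n.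

Lemma valleys_dyckP x :
  reflect (exists j, [/\ j < n.-1, d j < d j.+1 & x = 2 * n - 1 - (j + d j)])
          (x \in valleys (dyck_steps n c)).
Proof.
have d_last := proj_end_pred_last kup n_gt0.
rewrite valleysP size_dyck_steps.
apply: (iffP and3P) => [[lt_x down up] | [j [lt_j jump ->]]].
  rewrite nth_dyck_steps in down; last lia.
  rewrite nth_dyck_steps in up; last lia.
  case/hasP: up => j; rewrite mem_iota => /andP[_ lt_jn] /eqP anchor.
  have lt_j : j < n.-1.
    rewrite ltn_neqAle -ltnS prednK // lt_jn andbT; apply/eqP=> eq_j.
    by move: anchor; rewrite eq_j d_last; lia.
  exists j; split=> //; last lia.
  have le_j1n : j.+1 <= n by lia.
  rewrite ltn_neqAle (proj_end_mono kup) // andbT.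
  apply: contra down => /eqP eq_d; apply/hasP; exists j.+1; first by rewrite mem_iota; lia.
  by rewrite -eq_d; apply/eqP; lia.
have lt_jn : j < n by lia.
have ge_dj := proj_end_ge kup lt_jn; have le_dj1 := proj_end_le kup lt_jn.
split; first lia.
  rewrite nth_dyck_steps; last lia.
  apply/hasPn=> k; rewrite mem_iota => /andP[_ lt_kn]; apply/negP=> /eqP anchor.
  have [le_kj|lt_jk] := leqP k j.
    by have := proj_end_mono kup le_kj (ltnW lt_jn); lia.
  by have := proj_end_mono kup lt_jk (ltnW lt_kn); lia.
rewrite nth_dyck_steps; last lia.
apply/hasP; exists j; first by rewrite mem_iota; lia.
by apply/eqP; lia.
Qed.

Lemma valley_counts j : j < n.-1 ->
  count negb (take (2 * n - (j + d j)) (dyck_steps n c)) = n.+1 - d j /\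
  count id (take (2 * n - (j + d j)) (dyck_steps n c)) = n - j.+1.
Proof.
move=> lt_j; have lt_jn : j < n by lia.
have ge_dj := proj_end_ge kup lt_jn; have le_dj1 := proj_end_le kup lt_jn.
have mono := proj_end_mono kup (leqnSn j) lt_jn.
set k := 2 * n - (j + d j).
have le_k : k <= 2 * n by apply: leq_subr.
have := count_up_take le_k.
rewrite (@dyck_height_col j.+1 (j + d j)) //; try lia.
have := count_predC id (take k (dyck_steps n c)).
rewrite (@eq_count _ (predC id) negb) // size_takel ?size_dyck_steps //.
by rewrite /k; lia.
Qed.

Lemma bjs_dyck_fixedE i0 : i0 < n ->
  (bjs n (dyck_steps n c) i0.+1 == i0.+1) = jumps_below c (n - i0).
Proof.
move=> lt_i0; set s := dyck_steps n c.
have [uniq_D uniq_A] := uniq_valley_counts s.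
have arc_of_jump j : j < n.-1 -> [/\ j.+2 <= d j, d j.+1 <= n.+1,
    count negb (take (2 * n - 1 - (j + d j)).+1 s) = n.+1 - d j &
    (count id (take (2 * n - 1 - (j + d j)).+1 s)).+1 = n - j].
  move=> lt_j; have lt_jn : j < n by lia.
  have [ge_dj le_dj1] := (proj_end_ge kup lt_jn, proj_end_le kup lt_jn).
  have [D_j A_j] := valley_counts lt_j.
  have le_dj := proj_end_le kup (ltnW lt_jn).
  have -> : (2 * n - 1 - (j + d j)).+1 = 2 * n - (j + d j) by lia.
  by split; rewrite // A_j; lia.
rewrite bjsE bjs_fill_fixedE //; first last.
- by move=> _ /valleys_dyckP[j [lt_j _ ->]]; case: (arc_of_jump j lt_j) => _ _ _ ->; lia.
- move=> _ /valleys_dyckP[j [lt_j jump ->]].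
  by case: (arc_of_jump j lt_j) => ge_dj le_dj1 -> ->; lia.
apply/hasPn/allP=> [uncovered j | low_jumps].
  rewrite mem_iota add0n => /andP[_ lt_j]; apply/implyP=> jump; rewrite ltnNge; apply/negP=> ge_dj.
  have lt_jn1 : j < n.-1.
    have no_jump : d n.-1 = d n.-1.+1 by rewrite prednK // proj_end_pred_last // proj_end_last.
    rewrite ltn_neqAle -ltnS prednK //; apply/andP; split; last lia.
    by apply: contraTneq jump => ->; rewrite no_jump ltnn.
  have valley_j : 2 * n - 1 - (j + d j) \in valleys s by apply/valleys_dyckP; exists j.
  have := uncovered _ valley_j.
  by case: (arc_of_jump j lt_jn1) => _ _ -> ->; lia.
move=> _ /valleys_dyckP[j [lt_j jump ->]]; apply/negP.
have := low_jumps j; rewrite mem_iota add0n => /implyP low_j.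
by case: (arc_of_jump j lt_j) => _ _ -> ->; lia.
Qed.

End DyckPath.

Lemma card_set_pos_rev (P : pred nat) n :
  #|[set i : 'I_n.+1 | (0 < i) && P i]| = #|[set i : 'I_n | P (n - i)]|.
Proof.
pose f (i : 'I_n) : 'I_n.+1 := rev_ord (widen_ord (leqnSn n) i).
have f_inj : injective f by move=> i j /rev_ord_inj /(congr1 val) eq_ij; apply: val_inj.
rewrite -(card_imset _ f_inj); apply: eq_card=> k; rewrite inE.
apply/andP/imsetP=> [[k_gt0 P_k] | [i]]; last first.
  by rewrite inE => P_i ->; rewrite /= subSS subn_gt0 ltn_ord.
have lt_k : n - k < n by rewrite -subn_gt0 subKn ?k_gt0 // -ltnS.
exists (Ordinal lt_k); first by rewrite inE /= subKn // -ltnS.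
by apply: val_inj; rewrite /= subSS subKn // -ltnS.
Qed.

Theorem mainTheorem1 (n : nat) (pi : 'S_n) (c : seq nat) :
  1 <= n -> avoids321 pi -> is_A_pi pi c ->
  #|[set i : 'I_n.+1 | injdim_proj c i == 1]| = #|[set i : 'I_n | pi i == i]|.
Proof.
move=> n_gt0 _ [kup bjs_pi].
have -> : [set i : 'I_n.+1 | injdim_proj c i == 1] =
          [set i : 'I_n.+1 | (0 < i) && jumps_below c i].
  by apply/setP=> i; rewrite !inE (injdim_proj_eq1 kup) // -ltnS.
have -> : [set i : 'I_n | pi i == i] = [set i : 'I_n | jumps_below c (n - i)].
  by apply/setP=> i; rewrite !inE -(bjs_dyck_fixedE kup n_gt0) // bjs_pi eqSS.
exact: card_set_pos_rev.
Qed.
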